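(* Let $D\in\mathcal{O}_d$ be a discriminant and let $(t,u)\in\mathcal{O}_d^2$ satisfy $t^2-Du^2=4$ and $4<|t|<\frac49|u|^2$. Let $\tau\in\mathcal{O}_d/u\mathcal{O}_d$ be the residue class of $\frac{t-\beta u}{2}$, where $\beta,\xi\in\mathcal{O}_d$ are any elements with $D=\beta^2+4\xi$. Then every loxodromic element $B\in\mathrm{SL}_2(\mathcal{O}_d)_\tau[u]$ satisfies $$4\cosh(\ell(B))\ge|t|^2+|t^2-4|.$$ In particular, if a loxodromic element $B\in\mathrm{SL}_2(\mathcal{O}_d)_\tau[u]$ has $\mathrm{tr}(B)=t$, then $\ell(B)$ is the minimum of the translation lengths of loxodromic elements of $\mathrm{SL}_2(\mathcal{O}_d)_\tau[u]$, i.e. $B$ determines a closed geodesic of shortest length in $\mathrm{SL}_2(\mathcal{O}_d)_\tau[u]\backslash\mathbb{H}^3$.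
   Context: $d\in\{1,2,3,7,11,19,43,67,163\}$ (so $k_d=\mathbb{Q}(\sqrt{-d})$ has class number one), $\mathcal{O}_d$ is the ring of integers of $k_d$. An element $D\in\mathcal{O}_d$ is a discriminant if $D$ is not a perfect square in $\mathcal{O}_d$ and $D\equiv x^2\pmod{4\mathcal{O}_d}$ for some $x\in\mathcal{O}_d$; then $D=\beta^2+4\xi$ for some $\beta,\xi\in\mathcal{O}_d$, $\frac{t-\beta u}{2}\in\mathcal{O}_d$, and its class $\tau$ modulo $u\mathcal{O}_d$ is independent of the choice of $\beta,\xi$ and satisfies $\tau^2=1$ in $\mathcal{O}_d/u\mathcal{O}_d$. With $\pi_u:\mathrm{SL}_2(\mathcal{O}_d)\to\mathrm{SL}_2(\mathcal{O}_d/u\mathcal{O}_d)$ the reduction map and $\mathrm{Id}$ the identity matrix, $\mathrm{SL}_2(\mathcal{O}_d)_\tau[u]:=\pi_u^{-1}(\{\mathrm{Id},\tau\,\mathrm{Id}\})$. An element $B\in\mathrm{SL}_2(\mathbb{C})$ is loxodromic if $\mathrm{tr}(B)\notin[-2,2]$, and $\ell(B)$ denotes its translation length along its axis in $\mathbb{H}^3$. *)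

From HB Require Import structures.
From mathcomp Require Import all_boot all_order all_algebra.
From mathcomp Require Import complex.
From mathcomp Require Import all_classical all_reals.
From mathcomp Require Import Rstruct.
From mathcomp.analysis Require Import sequences exp.
Set Implicit Arguments.
Unset Strict Implicit.
Unset Printing Implicit Defensive.
Import Order.TTheory GRing.Theory Num.Theory.
Local Open Scope ring_scope.
Local Open Scope complex_scope.

Notation RR := Rdefinitions.R.
Notation CC := (RR[i]).

Definition class_number_one_d (d : nat) : bool :=
  d \in [:: 1; 2; 3; 7; 11; 19; 43; 67; 163]%N.

(* generator of O_d over Z: sqrt(-d) if d = 1,2 (d = 1,2 mod 4),
   (1 + sqrt(-d))/2 if d = 3 mod 4 (all other listed d) *)
Definition omega_d (d : nat) : CC :=
  if (d <= 2)%N then Complex 0 (Num.sqrt (d%:R : RR))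
  else Complex (1/2) (Num.sqrt (d%:R : RR) / 2).

Definition inO (d : nat) (z : CC) : Prop :=
  exists a b : int, z = a%:~R + b%:~R * omega_d d.

Definition dvdO (d : nat) (u x : CC) : Prop :=
  exists k : CC, inO d k /\ x = u * k.

Definition discriminant (d : nat) (D : CC) : Prop :=
  [/\ inO d D,
      ~ (exists x : CC, inO d x /\ D = x ^+ 2)
    & exists x : CC, inO d x /\ dvdO d 4 (D - x ^+ 2)].

Definition inSL2O (d : nat) (B : 'M[CC]_2) : Prop :=
  (forall i j, inO d (B i j)) /\ \det B = 1.

(* SL_2(O_d)_tau[u] = pi_u^{-1}({Id, tau Id}) : B is congruent modulo u O_d
   (entrywise) to Id or to tau * Id *)
Definition inSL2O_tau_u (d : nat) (tau u : CC) (B : 'M[CC]_2) : Prop :=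
  inSL2O d B /\
  ((forall i j, dvdO d u (B i j - (i == j)%:R)) \/
   (forall i j, dvdO d u (B i j - (i == j)%:R * tau))).

Definition loxodromic (B : 'M[CC]_2) : Prop :=
  ~ (complex.Im (\tr B) = 0 /\ -2 <= complex.Re (\tr B) <= 2).

Definition cabs (z : CC) : RR := Num.sqrt (complex.Re z ^+ 2 + complex.Im z ^+ 2).

Definition coshR (x : RR) : RR := (expR x + expR (- x)) / 2.

(* translation length of B in SL_2(C) acting on H^3:
   ell(B) = 2 log|lambda|, lambda the eigenvalue of B of modulus >= 1.
   Here lambda is a root of X^2 - tr(B) X + 1 (the other root is 1/lambda),
   so 2 |log |lambda|| does not depend on the root chosen. *)
Definition eig (B : 'M[CC]_2) : CC :=
  (\tr B + sqrtc ((\tr B) ^+ 2 - 4)) / 2.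

Definition transl_length (B : 'M[CC]_2) : RR :=
  2 * `| ln (cabs (eig B)) |.

(* Write B in SL_2(O_d)_tau[u] as c Id + u P with c = 1 or c = tau.  From
   t^2 - D u^2 = 4 and D = beta^2 + 4 xi we get tau^2 + beta tau u - xi u^2 = 1
   (and trivially 1^2 + 0 - 0 = 1), so c is a unit modulo u, and det B = 1
   forces tr B = 2c + beta u + u^2 m for some m in O_d.  Nonzero elements of
   O_d have modulus at least 1, so unless tr B = t (c = tau, m = 0) we get
   |tr B| >= |u|^2 - |t| > 5/4 |t| >= |t| + 1, using |t| < 4/9 |u|^2 and
   |t| > 4; for c = 1 the case m = 0 gives tr B = 2, which is not loxodromic.
   Finally 4 cosh l(B) = |tr B|^2 + |tr B^2 - 4|, which is then at least
   |t|^2 + |t^2 - 4|, and cosh is increasing on [0, +oo). *)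

From HB Require Import structures.
From mathcomp Require Import all_boot all_order all_algebra.
From mathcomp Require Import complex.
From mathcomp Require Import all_classical all_reals.
From mathcomp Require Import Rstruct.
From mathcomp.analysis Require Import sequences exp.
From mathcomp Require Import ring lra zify.
Set Implicit Arguments.
Unset Strict Implicit.
Unset Printing Implicit Defensive.

Import Order.TTheory GRing.Theory Num.Theory.
Local Open Scope ring_scope.
Local Open Scope complex_scope.

Lemma det_mx22 (R : comNzRingType) (A : 'M[R]_2) :
  \det A = A 0 0 * A 1 1 - A 0 1 * A 1 0.
Proof.
rewrite (expand_det_row _ 0) !big_ord_recl big_ord0 /cofactor !det_mx11 /=.
rewrite !mxE /bump /= expr0 expr1 !mul1r mulN1r addr0 mulrN.
by congr (_ * _ - _ * _); congr (A _ _); apply/val_inj.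
Qed.

Lemma mxtrace22 (R : comNzRingType) (A : 'M[R]_2) : \tr A = A 0 0 + A 1 1.
Proof.
rewrite /mxtrace !big_ord_recl big_ord0 addr0.
by congr (A _ _ + A _ _); apply/val_inj.
Qed.

Lemma cabs_sqr_complex (x y : RR) : cabs (x +i* y) ^+ 2 = x ^+ 2 + y ^+ 2.
Proof. by rewrite sqr_sqrtr // addr_ge0 ?sqr_ge0. Qed.

Lemma normc_cabs (z : CC) : `|z| = (cabs z)%:C.
Proof. exact: normc_def. Qed.

Lemma cabs_ge0 (z : CC) : 0 <= cabs z.
Proof. exact: sqrtr_ge0. Qed.

Lemma cabsM (x y : CC) : cabs (x * y) = cabs x * cabs y.
Proof. by apply: complexI; rewrite -normc_cabs normrM !normc_cabs -rmorphM. Qed.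

Lemma cabsX2 (x : CC) : cabs (x ^+ 2) = cabs x ^+ 2.
Proof. by rewrite !expr2 cabsM. Qed.

Lemma cabs_nat (n : nat) : cabs n%:R = n%:R.
Proof.
by apply: complexI; rewrite -normc_cabs normr_nat -(rmorph_nat (real_complex RR)).
Qed.

Lemma cabs0 : cabs 0 = 0.
Proof. exact: cabs_nat 0. Qed.

Lemma cabs1 : cabs 1 = 1.
Proof. exact: cabs_nat 1. Qed.

Lemma ler_cabsB (x y : CC) : cabs (x - y) <= cabs x + cabs y.
Proof. by have := ler_normB x y; rewrite !normc_cabs -rmorphD lecR. Qed.

Lemma lerB_cabsD (x y : CC) : cabs x - cabs y <= cabs (x + y).
Proof. by have := lerB_normD x y; rewrite !normc_cabs -rmorphB lecR. Qed.

Lemma lerB_cabsB (x y : CC) : cabs x - cabs y <= cabs (x - y).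
Proof. by have := lerB_dist x y; rewrite !normc_cabs -rmorphB lecR. Qed.

Lemma cabs_parallelogram (x y : CC) :
  cabs (x + y) ^+ 2 + cabs (x - y) ^+ 2 = 2 * cabs x ^+ 2 + 2 * cabs y ^+ 2.
Proof. by case: x => a b; case: y => c e; rewrite /= !cabs_sqr_complex; ring. Qed.

Lemma class_number_one_d_cases (d : nat) : class_number_one_d d ->
  (0 < d <= 2)%N || (2 < d)%N && (4 %| d.+1)%N.
Proof. by move: d; apply: allP. Qed.

Lemma omega_d_sqr_small (d : nat) : (d <= 2)%N -> omega_d d ^+ 2 = - d%:R.
Proof.
move=> d_le2; rewrite /omega_d d_le2 expr2 -(rmorph_nat (real_complex RR)) /=.
by simpc; rewrite -expr2 sqr_sqrtr ?ler0n.
Qed.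

Lemma omega_d_sqr_large (d k : nat) : (2 < d)%N -> d.+1 = (k * 4)%N ->
  omega_d d ^+ 2 = omega_d d - k%:R.
Proof.
move=> d_gt2 dk; rewrite /omega_d leqNgt d_gt2 /= expr2.
rewrite -(rmorph_nat (real_complex RR)) /=; simpc.
have sqrt_d2 : Num.sqrt (d%:R : RR) ^+ 2 = k%:R * 4 - 1.
  by rewrite sqr_sqrtr ?ler0n // -natrM -dk -addn1 natrD addrK.
by congr (_ +i* _); [rewrite mulrACA -(expr2 (Num.sqrt _)) sqrt_d2 | ]; field.
Qed.

Lemma sqr_cabs_omega_small (d : nat) (a b : int) : (d <= 2)%N ->
  cabs (a%:~R + b%:~R * omega_d d) ^+ 2 = (a ^+ 2 + d%:Z * b ^+ 2)%:~R.
Proof.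
move=> d_le2; rewrite /omega_d d_le2 -!(rmorph_int (real_complex RR)) /=; simpc.
rewrite cabs_sqr_complex exprMn sqr_sqrtr ?ler0n // intrD intrM rmorphXn /=.
by rewrite pmulrn; ring.
Qed.

Lemma sqr_cabs_omega_large (d k : nat) (a b : int) :
  (2 < d)%N -> d.+1 = (k * 4)%N ->
  cabs (a%:~R + b%:~R * omega_d d) ^+ 2 = (a ^+ 2 + a * b + k%:Z * b ^+ 2)%:~R.
Proof.
move=> d_gt2 dk; rewrite /omega_d leqNgt d_gt2.
rewrite -!(rmorph_int (real_complex RR)) /=; simpc; rewrite cabs_sqr_complex exprMn expr_div_n sqr_sqrtr ?ler0n //.
have -> : (d%:R : RR) = k%:R * 4 - 1 by rewrite -natrM -dk -addn1 natrD addrK.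
by rewrite !intrD !intrM pmulrn; field.
Qed.

Section RingOfIntegers.

Variable d : nat.
Hypothesis hd : class_number_one_d d.

Lemma omega_d_sqr :
  exists p q : int, omega_d d ^+ 2 = p%:~R + q%:~R * omega_d d.
Proof.
have [/andP[_ d_le2]|/andP[d_gt2 /dvdnP[k dk]]] :=
  orP (class_number_one_d_cases hd).
  by exists (- d%:Z), 0; rewrite omega_d_sqr_small // mul0r addr0 intrN.
by exists (- k%:Z), 1; rewrite (omega_d_sqr_large d_gt2 dk) intrN mul1r addrC.
Qed.

Lemma inO0 : inO d 0.
Proof. by exists 0, 0; rewrite !mulr0z mul0r addr0. Qed.

Lemma inOD x y : inO d x -> inO d y -> inO d (x + y).
Proof.
move=> [a [b ->]] [a' [b' ->]].
by exists (a + a'), (b + b'); rewrite !intrD; ring.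
Qed.

Lemma inON x : inO d x -> inO d (- x).
Proof. by move=> [a [b ->]]; exists (- a), (- b); rewrite !intrN; ring. Qed.

Lemma inOB x y : inO d x -> inO d y -> inO d (x - y).
Proof. by move=> hx hy; apply: inOD => //; apply: inON. Qed.

Lemma inOM x y : inO d x -> inO d y -> inO d (x * y).
Proof.
move=> [a [b ->]] [a' [b' ->]]; have [p [q omega2]] := omega_d_sqr.
exists (a * a' + b * b' * p), (a * b' + b * a' + b * b' * q).
rewrite !intrD !intrM; apply/subr0_eq.
transitivity (b%:~R * b'%:~R * (omega_d d ^+ 2 - (p%:~R + q%:~R * omega_d d))
              : CC).
  by ring.
by rewrite omega2 subrr mulr0.
Qed.

Lemma cabs_inO_ge1 z : inO d z -> z != 0 -> 1 <= cabs z.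
Proof.
move=> [a [b ->]] z_neq0.
have ab_neq0 : (a != 0) || (b != 0).
  apply: contraNT z_neq0; rewrite negb_or !negbK => /andP[/eqP-> /eqP->].
  by rewrite mul0r addr0.
rewrite -(@expr_ge1 _ 2) ?cabs_ge0 //.
have [/andP[d_gt0 d_le2]|/andP[d_gt2 /dvdnP[k dk]]] :=
  orP (class_number_one_d_cases hd).
  by rewrite sqr_cabs_omega_small // ler1z; nia.
rewrite (sqr_cabs_omega_large _ _ d_gt2 dk) ler1z.
have k_ge1 : (1 <= k)%N by lia.
have [b0|b_neq0] := eqVneq b 0; first by move: ab_neq0; rewrite b0; nia.
have := sqr_ge0 (2 * a + b); nia.
Qed.

End RingOfIntegers.

Lemma dvdO_subP (d : nat) (u x y : CC) :
  dvdO d u (x - y) -> exists2 k, inO d k & x = y + u * k.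
Proof. by move=> [k [k_in e]]; exists k; rewrite // -e addrC subrK. Qed.

(* The hypothesis on [c] makes [c] a unit modulo [u], with inverse
   [c + beta * u]; this is what lets [\det B = 1] determine [\tr B] modulo
   [u ^+ 2]. *)
Lemma trace_congr_scalar (d : nat) (u c beta xi : CC) (B : 'M[CC]_2) :
  class_number_one_d d -> inO d u -> inO d beta -> inO d xi -> u != 0 ->
  c ^+ 2 + beta * c * u - xi * u ^+ 2 = 1 ->
  inSL2O d B -> (forall i j, dvdO d u (B i j - (i == j)%:R * c)) ->
  exists2 m, inO d m & \tr B = 2 * c + beta * u + u ^+ 2 * m.
Proof.
move=> hd hu hbeta hxi u_neq0 c_unit [B_in detB] B_congr.
have [p p_in e00] := dvdO_subP (B_congr 0 0).
have [q q_in e11] := dvdO_subP (B_congr 1 1).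
have [r r_in e01] := dvdO_subP (B_congr 0 1).
have [w w_in e10] := dvdO_subP (B_congr 1 0).
rewrite eqxx mul1r in e00 e11; rewrite mul0r add0r in e01 e10.
have c_in : inO d c.
  have -> : c = B 0 0 - u * p by rewrite e00 addrK.
  by apply: inOB (B_in 0 0) (inOM hd hu p_in).
set n := p + q - beta; set k := p * q - r * w.
have n_in : inO d n by apply: inOB (inOD p_in q_in) hbeta.
have k_in : inO d k by apply: inOB (inOM hd p_in q_in) (inOM hd r_in w_in).
have det_congr : c * n + u * (k + xi) = 0.
  have : u * (c * n + u * (k + xi)) =
         \det B - (c ^+ 2 + beta * c * u - xi * u ^+ 2).
    by rewrite det_mx22 e00 e11 e01 e10 /n /k; ring.
  by rewrite detB c_unit subrr => /eqP; rewrite mulf_eq0 (negbTE u_neq0) => /eqP.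
set m := n * (beta * c - xi * u) - c * (k + xi).
have n_eq : n = u * m.
  apply/subr0_eq.
  transitivity (c * (c * n + u * (k + xi))
                - n * (c ^+ 2 + beta * c * u - xi * u ^+ 2 - 1)).
    by rewrite /m; ring.
  by rewrite det_congr c_unit subrr !mulr0 subr0.
exists m.
  apply: inOB (inOM hd n_in _) (inOM hd c_in (inOD k_in hxi)).
  exact: inOB (inOM hd hbeta c_in) (inOM hd hxi hu).
by rewrite mxtrace22 e00 e11 expr2 -mulrA -n_eq /n; ring.
Qed.

Lemma cabs_trace_shift_ge (d : nat) (t u s0 m : CC) :
  class_number_one_d d -> 4 < cabs t -> cabs t < 4 / 9 * cabs u ^+ 2 ->
  inO d m -> m != 0 -> cabs s0 <= cabs t ->
  cabs t ^+ 2 + 4 <= cabs (s0 + u ^+ 2 * m) ^+ 2.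
Proof.
move=> hd t_gt4 t_lt_u m_in m_neq0 s0_le.
have m_ge1 := cabs_inO_ge1 hd m_in m_neq0.
have := lerB_cabsD (u ^+ 2 * m) s0; rewrite [_ + s0]addrC cabsM cabsX2 => lower.
have u2_le : cabs u ^+ 2 <= cabs u ^+ 2 * cabs m by rewrite ler_peMr ?sqr_ge0.
have : cabs t + 1 <= cabs (s0 + u ^+ 2 * m) by lra.
nra.
Qed.

Lemma trace_loxodromic_congr (d : nat) (t u beta xi tau : CC) (B : 'M[CC]_2) :
  class_number_one_d d -> inO d u -> inO d beta -> inO d xi ->
  tau ^+ 2 + beta * tau * u - xi * u ^+ 2 = 1 -> 2 * tau + beta * u = t ->
  4 < cabs t -> cabs t < 4 / 9 * cabs u ^+ 2 ->
  inSL2O_tau_u d tau u B -> loxodromic B ->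
  \tr B = t \/ cabs t ^+ 2 + 4 <= cabs (\tr B) ^+ 2.
Proof.
move=> hd hu hbeta hxi tau_unit t_tau t_gt4 t_lt_u [B_in B_congr] B_lox.
have u_neq0 : u != 0.
  by apply: contraTneq t_lt_u => ->; rewrite -leNgt cabs0 expr0n mulr0 cabs_ge0.
have far := cabs_trace_shift_ge hd t_gt4 t_lt_u.
case: B_congr => [B_congr1|B_congr_tau].
  have one_unit : 1 ^+ 2 + 0 * 1 * u - 0 * u ^+ 2 = 1.
    by rewrite !mul0r subr0 addr0 expr1n.
  have B_congr_one : forall i j, dvdO d u (B i j - (i == j)%:R * 1).
    by move=> i j; rewrite mulr1.
  have [m m_in trB] :=
    trace_congr_scalar hd hu (inO0 d) (inO0 d) u_neq0 one_unit B_in B_congr_one.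
  rewrite mulr1 mul0r addr0 in trB.
  have m_neq0 : m != 0.
    apply: contraPneq B_lox => m0; apply; rewrite trB m0 mulr0 addr0 /=.
    by split; [rewrite addr0 | lra].
  by right; rewrite trB; apply: far; rewrite // cabs_nat; lra.
have [m m_in] :=
  trace_congr_scalar hd hu hbeta hxi u_neq0 tau_unit B_in B_congr_tau.
rewrite t_tau => ->.
have [->|m_neq0] := eqVneq m 0; first by left; rewrite mulr0 addr0.
by right; apply: far.
Qed.

Lemma coshRN (x : RR) : coshR (- x) = coshR x.
Proof. by rewrite /coshR opprK addrC. Qed.

Lemma coshR_norm (x : RR) : coshR `|x| = coshR x.
Proof.
have [x_ge0|x_lt0] := lerP 0 x; first by rewrite ger0_norm.
by rewrite ltr0_norm // coshRN.
Qed.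

Lemma coshR_2ln (r : RR) : 0 < r -> 2 * coshR (2 * `|ln r|) = r ^+ 2 + r ^- 2.
Proof.
move=> r_gt0; rewrite -[2 * `|_|]ger0_norm ?mulr_ge0 // normrM normr_id.
rewrite -normrM coshR_norm /coshR expRN expRM_natl lnK ?posrE //.
by rewrite mulrC divfK ?pnatr_eq0.
Qed.

Definition four_cosh_of_trace (s : CC) : RR := cabs s ^+ 2 + cabs (s ^+ 2 - 4).

Lemma transl_length_ge0 (B : 'M[CC]_2) : 0 <= transl_length B.
Proof. exact: mulr_ge0. Qed.

(* [eig B] and [(tr B - sqrtc (tr B ^+ 2 - 4)) / 2] are the eigenvalues
   [lambda] and [lambda^-1] of [B]. *)
Lemma four_coshR_transl_length (B : 'M[CC]_2) :
  4 * coshR (transl_length B) = four_cosh_of_trace (\tr B).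
Proof.
rewrite /transl_length /eig /four_cosh_of_trace.
set s := \tr B; set delta := sqrtc _.
have delta2 : delta ^+ 2 = s ^+ 2 - 4 by rewrite sqr_sqrtc.
set l := (s + delta) / 2; set m := (s - delta) / 2.
have lm1 : l * m = 1.
  have -> : l * m = (s ^+ 2 - delta ^+ 2) / 4 by rewrite /l /m; field.
  by rewrite delta2 opprB addrC subrK divff // pnatr_eq0.
have l_gt0 : 0 < cabs l.
  rewrite lt_def cabs_ge0 andbT; apply: contra_neq (oner_neq0 RR) => l0.
  by rewrite -cabs1 -lm1 cabsM l0 mul0r.
have cabs_m : cabs m = (cabs l)^-1.
  by apply: (mulfI (lt0r_neq0 l_gt0)); rewrite -cabsM lm1 cabs1 divff ?lt0r_neq0.
have -> : s ^+ 2 - 4 = (l - m) ^+ 2.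
  by rewrite -delta2 /l /m; congr (_ ^+ 2); field.
have -> : s = l + m by rewrite /l /m; field.
rewrite cabsX2 cabs_parallelogram cabs_m exprVn.
by rewrite -mulrDr -coshR_2ln // mulrA -natrM.
Qed.

Lemma coshR_lt : {in Num.nneg &, {homo coshR : x y / x < y}}.
Proof.
move=> x y; rewrite !nnegrE => x_ge0 y_ge0 xy.
rewrite /coshR ltr_pM2r ?invr_gt0 // -subr_gt0.
have -> : expR y + expR (- y) - (expR x + expR (- x)) =
          (expR y - expR x) * (1 - expR (- x - y)).
  by rewrite expRD !expRN; field; rewrite !gt_eqF ?expR_gt0.
by rewrite mulr_gt0 // subr_gt0 ?ltr_expR ?expR_lt1 //; lra.
Qed.

Lemma ler_coshR : {in Num.nneg &, {mono coshR : x y / x <= y}}.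
Proof. exact: le_mono_in coshR_lt. Qed.

Lemma four_cosh_of_trace_le (s t : CC) : cabs t ^+ 2 + 4 <= cabs s ^+ 2 ->
  four_cosh_of_trace t <= four_cosh_of_trace s.
Proof.
move=> hts; have := ler_cabsB (t ^+ 2) 4; have := lerB_cabsB (s ^+ 2) 4.
rewrite /four_cosh_of_trace !cabsX2 cabs_nat; lra.
Qed.

Theorem proposition4p4 (d : nat) (hd : class_number_one_d d)
  (D t u : CC) (hD : discriminant d D) (ht : inO d t) (hu : inO d u)
  (hpell : t ^+ 2 - D * u ^+ 2 = 4)
  (ht1 : 4 < cabs t) (ht2 : cabs t < 4 / 9 * cabs u ^+ 2)
  (beta xi : CC) (hbeta : inO d beta) (hxi : inO d xi)
  (hDbx : D = beta ^+ 2 + 4 * xi) :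
  let tau := (t - beta * u) / 2 in
  (forall B : 'M[CC]_2, inSL2O_tau_u d tau u B -> loxodromic B ->
     4 * coshR (transl_length B) >= cabs t ^+ 2 + cabs (t ^+ 2 - 4))
  /\
  (forall B : 'M[CC]_2, inSL2O_tau_u d tau u B -> loxodromic B ->
     \tr B = t ->
     forall B' : 'M[CC]_2, inSL2O_tau_u d tau u B' -> loxodromic B' ->
       transl_length B <= transl_length B').
Proof.
move=> tau.
have tau_unit : tau ^+ 2 + beta * tau * u - xi * u ^+ 2 = 1.
  have -> : tau ^+ 2 + beta * tau * u - xi * u ^+ 2 = (t ^+ 2 - D * u ^+ 2) / 4.
    by rewrite /tau hDbx; field.
  by rewrite hpell divff // pnatr_eq0.
have t_tau : 2 * tau + beta * u = t by rewrite /tau; field.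
have cosh_ge B : inSL2O_tau_u d tau u B -> loxodromic B ->
    four_cosh_of_trace t <= 4 * coshR (transl_length B).
  move=> B_in B_lox; rewrite four_coshR_transl_length.
  have [->//|] :=
    trace_loxodromic_congr hd hu hbeta hxi tau_unit t_tau ht1 ht2 B_in B_lox.
  exact: four_cosh_of_trace_le.
split; first exact: cosh_ge.
move=> B B_in B_lox trB B' B'_in B'_lox.
rewrite -ler_coshR ?nnegrE ?transl_length_ge0 // -(@ler_pM2l _ 4) //.
by rewrite four_coshR_transl_length trB cosh_ge.
Qed.
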